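(* Let $G_b$ be a bipartite graph with left vertices $r_1,\dots,r_n$ and right vertices $1,\dots,n$, and let $\Omega$ be the (assumed nonempty) set of perfect matchings of $G_b$, with uniform prior $\Phi\sim\mathrm{Unif}(\Omega)$. For $I\subseteq[n]$ and $\phi\in\Omega$ let $f(I,\phi)=|\Omega|-|\Omega^{(I,\phi)}|$. Then (i) $f$ is adaptive monotone and adaptive submodular with respect to the uniform prior on $\Omega$; and (ii) for every budget $K\in\{1,\dots,n\}$, the adaptive greedy policy $\pi^{g}$ with budget $K$ satisfies $F(\pi^{g})\ge (1-1/e)\max_{\pi}F(\pi)$, where the maximum is over all adaptive policies with budget $K$.
   Context: Each $\phi\in\Omega$ matches each right vertex $v$ to a unique left vertex $\phi(v)$; intervening on item $v\in[n]$ under realization $\phi$ yields the outcome $\phi(v)$ (the matching edge $(\phi(v),v)$). For $I\subseteq[n]$, $\Omega^{(I,\phi)}=\{g\in\Omega: g(v)=\phi(v)\ \forall v\in I\}$. A partial realization is a map $\psi$ from a set $\mathrm{dom}(\psi)\subseteq[n]$ to left vertices such that some $\phi\in\Omega$ agrees with $\psi$ on $\mathrm{dom}(\psi)$ (written $\phi\sim\psi$). For $v\notin\mathrm{dom}(\psi)$, the conditional expected marginal benefit is $\Delta(v\mid\psi)=\mathbb{E}[f(\mathrm{dom}(\psi)\cup\{v\},\Phi)-f(\mathrm{dom}(\psi),\Phi)\mid \Phi\sim\psi]$, where conditioning means $\Phi$ is uniform over $\{\phi\in\Omega:\phi\sim\psi\}$. $f$ is adaptive monotone if $\Delta(v\mid\psi)\ge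 0$ for all partial realizations $\psi$ and $v\notin\mathrm{dom}(\psi)$; adaptive submodular if $\Delta(v\mid\psi)\ge\Delta(v\mid\psi')$ whenever $\psi\subseteq\psi'$ (i.e. $\mathrm{dom}(\psi)\subseteq\mathrm{dom}(\psi')$ and $\psi'$ agrees with $\psi$ on $\mathrm{dom}(\psi)$) are partial realizations and $v\notin\mathrm{dom}(\psi')$. An adaptive policy with budget $K$ selects items $i_1,\dots,i_K$ sequentially, each $i_t$ being a function of the previous items and their observed outcomes $((i_1,\phi(i_1)),\dots,(i_{t-1},\phi(i_{t-1})))$; $I(\pi,\phi)$ is the set selected under realization $\phi$, and $F(\pi)=\mathbb{E}_{\Phi\sim\mathrm{Unif}(\Omega)}[f(I(\pi,\Phi),\Phi)]$. The adaptive greedy policy selects, at each step with current partial realization $\psi$, an item $v\notin\mathrm{dom}(\psi)$ maximizing $\Delta(v\mid\psi)$. *)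

From mathcomp Require Import all_boot all_order all_algebra.
From mathcomp Require Import reals sequences exp.
Set Implicit Arguments. Unset Strict Implicit. Unset Printing Implicit Defensive.
Import Order.TTheory GRing.Theory Num.Theory.
Local Open Scope ring_scope.

Section Matching.
Variables (R : realType) (n : nat).
(* Bipartite graph G_b: left vertex r_i is i : 'I_n, right vertex v is v : 'I_n;
   adj i v = true iff (r_i, v) is an edge. *)
Variable adj : 'I_n -> 'I_n -> bool.

(* A realization phi maps each right vertex v to its matched left vertex phi v. *)
Definition realization := {ffun 'I_n -> 'I_n}.

Definition Omega : {set realization} :=
  [set phi : realization | injectiveb phi && [forall v, adj (phi v) v]].

Definition OmegaI (I : {set 'I_n}) (phi : realization) : {set realization} :=
  [set g in Omega | [forall v in I, g v == phi v]].

Definition f (I : {set 'I_n}) (phi : realization) : R :=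
  (#|Omega|%:R - #|OmegaI I phi|%:R).

Definition pmap := {ffun 'I_n -> option 'I_n}.
Definition dom (psi : pmap) : {set 'I_n} := [set v | psi v != None].
Definition agrees (phi : realization) (psi : pmap) : bool :=
  [forall v, (psi v == None) || (psi v == Some (phi v))].
Definition partial_realization (psi : pmap) : Prop :=
  exists2 phi, phi \in Omega & agrees phi psi.
Definition subrealization (psi psi' : pmap) : Prop :=
  forall v, psi v != None -> psi' v = psi v.

(* Realizations consistent with psi: support of Phi | Phi ~ psi (uniform). *)
Definition consistent (psi : pmap) : {set realization} :=
  [set phi in Omega | agrees phi psi].

Definition Delta (v : 'I_n) (psi : pmap) : R :=
  (\sum_(phi in consistent psi) (f (dom psi :|: [set v]) phi - f (dom psi) phi))
    / #|consistent psi|%:R.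

Definition adaptive_monotone : Prop :=
  forall psi v, partial_realization psi -> v \notin dom psi -> 0 <= Delta v psi.

Definition adaptive_submodular : Prop :=
  forall psi psi' v, partial_realization psi -> partial_realization psi' ->
    subrealization psi psi' -> v \notin dom psi' -> Delta v psi' <= Delta v psi.

(* Adaptive (deterministic) policies: the next item is a function of the history
   of observed (item, outcome) pairs. *)
Definition history := seq ('I_n * 'I_n).
Definition policy := history -> 'I_n.

Fixpoint run (pi : policy) (phi : realization) (t : nat) : history :=
  match t with
  | 0 => [::]
  | t'.+1 => let h := run pi phi t' in rcons h (pi h, phi (pi h))
  end.

Definition psi_of (h : history) : pmap :=
  [ffun v => omap snd (ohead [seq p <- h | p.1 == v])].

Definition selected (pi : policy) (K : nat) (phi : realization) : {set 'I_n} :=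
  [set v | v \in map fst (run pi phi K)].

Definition Fval (pi : policy) (K : nat) : R :=
  (\sum_(phi in Omega) f (selected pi K phi) phi) / #|Omega|%:R.

Definition valid_policy (pi : policy) (K : nat) : Prop :=
  forall phi, phi \in Omega -> uniq (map fst (run pi phi K)).

(* Adaptive greedy policy with budget K (any tie-breaking): at every reachable
   step it picks an item outside the current domain maximizing Delta. *)
Definition greedy_policy (g : policy) (K : nat) : Prop :=
  forall phi t, phi \in Omega -> (t < K)%N ->
    let psi := psi_of (run g phi t) in
    g (run g phi t) \notin dom psi /\
    forall v, v \notin dom psi -> Delta v psi <= Delta (g (run g phi t)) psi.
End Matching.

(* For a set C of matchings still consistent with the observations, the expected gain of
   querying v is the mean pairwise disagreement (1/|C|) sum_{x,y in C} [x v <> y v]. The mean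
   pairwise distance of a pseudometric can only grow when the set is enlarged (triangle
   inequality through the added points), which is adaptive submodularity; monotonicity is
   nonnegativity. For the greedy bound, running any policy pi for K steps on top of the first i
   greedy steps gains, step by step and in expectation, no more than the next greedy step, so
   F(pi) - F(g_i) <= K (F(g_(i+1)) - F(g_i)); the gap thus shrinks by 1 - 1/K per step and
   (1 - 1/K)^K <= 1/e. *)

From Pilot Require Import Defs.
From mathcomp Require Import all_boot all_order all_algebra.
From mathcomp Require Import reals sequences exp.
From mathcomp Require Import ring lra.
Set Implicit Arguments. Unset Strict Implicit. Unset Printing Implicit Defensive.
Import Order.TTheory GRing.Theory Num.Theory.
Local Open Scope ring_scope.

Section MeanPairwiseDistance.
Variables (R : realFieldType) (T : finType) (d : T -> T -> R).
Hypotheses (d_ge0 : forall x y, 0 <= d x y) (dC : forall x y, d x y = d y x)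
  (d_tri : forall x y z, d x y <= d x z + d y z).

Definition cross_sum (A B : {set T}) : R := \sum_(x in A) \sum_(y in B) d x y.

Lemma cross_sum_ge0 A B : 0 <= cross_sum A B.
Proof. by do 2 (apply: sumr_ge0 => ? _). Qed.

Lemma cross_sumC A B : cross_sum A B = cross_sum B A.
Proof. by rewrite /cross_sum exchange_big; do 2 (apply: eq_bigr => ? _). Qed.

Lemma cross_sum_setIDl A B C :
  cross_sum A C = cross_sum (A :&: B) C + cross_sum (A :\: B) C.
Proof. exact: big_setID. Qed.

Lemma cross_sum_setIDr A B C :
  cross_sum C A = cross_sum C (A :&: B) + cross_sum C (A :\: B).
Proof. by rewrite cross_sumC (cross_sum_setIDl A B) !(cross_sumC C). Qed.

Lemma cross_sum_tri (A D : {set T}) :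
  cross_sum A A *+ #|D| <= cross_sum A D *+ #|A| *+ 2.
Proof.
have -> : cross_sum A A *+ #|D| = \sum_(x in A) \sum_(y in A) \sum_(z in D) d x y.
  rewrite -sumrMnl; apply: eq_bigr => x _; rewrite -sumrMnl.
  by apply: eq_bigr => y _; rewrite sumr_const.
have -> : cross_sum A D *+ #|A| *+ 2 =
    \sum_(x in A) \sum_(y in A) \sum_(z in D) (d x z + d y z).
  rewrite mulr2n; under eq_bigr do under eq_bigr do rewrite big_split.
  under eq_bigr do rewrite big_split /=.
  rewrite big_split /= !sumr_const -sumrMnl.
  by under [X in _ = X + _]eq_bigr do rewrite sumr_const.
by do 3 (apply: ler_sum => ? _); apply: d_tri.
Qed.

Lemma cross_sum_mean_mono (B C : {set T}) : B \subset C ->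
  cross_sum B B / #|B|%:R <= cross_sum C C / #|C|%:R.
Proof.
move=> sBC; have [->|/set0Pn [b bB]] := eqVneq B set0.
  by rewrite /cross_sum big_set0 mul0r divr_ge0 ?cross_sum_ge0.
have B_gt0 : 0 < #|B|%:R :> R by rewrite ltr0n card_gt0; apply/set0Pn; exists b.
have C_gt0 : 0 < #|C|%:R :> R.
  by rewrite ltr0n card_gt0; apply/set0Pn; exists b; apply: (subsetP sBC).
set D := C :\: B.
have cardC : #|C|%:R = #|B|%:R + #|D|%:R :> R.
  by rewrite -natrD -(cardsID B C) (setIidPr sBC).
have sumC : cross_sum C C = cross_sum B B + cross_sum B D *+ 2 + cross_sum D D.
  rewrite (cross_sum_setIDl C B) !(cross_sum_setIDr C B) (setIidPr sBC).
  by rewrite [cross_sum D B]cross_sumC; ring.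
have tri := cross_sum_tri B D; rewrite -!(mulr_natr (cross_sum _ _)) in tri.
have DD_ge0 : 0 <= cross_sum D D * #|B|%:R by rewrite mulr_ge0 ?cross_sum_ge0.
rewrite ler_pdivrMr // mulrAC ler_pdivlMr // sumC cardC -(mulr_natr (cross_sum _ _)).
nra.
Qed.

End MeanPairwiseDistance.

Lemma sum_block_mean (R : numFieldType) (T : finType) (A : {set T})
    (P : T -> {set T}) (X : T -> R) :
  (forall x, x \in A -> x \in P x) ->
  (forall x y, x \in A -> y \in P x -> P y = P x) ->
  (forall x, x \in A -> P x \subset A) ->
  \sum_(x in A) X x = \sum_(x in A) (\sum_(y in P x) X y) / #|P x|%:R.
Proof.
move=> Pxx Peq PsubA.
have blockE x y : x \in A -> y \in A -> (x \in P y) = (y \in P x).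
  move=> xA yA; apply/idP/idP => [xPy|yPx].
    by rewrite (Peq y x yA xPy) Pxx.
  by rewrite (Peq x y xA yPx) Pxx.
transitivity (\sum_(x in A) \sum_(y in P x) X y / #|P y|%:R); last first.
  apply: eq_bigr => x xA; rewrite mulr_suml.
  by apply: eq_bigr => y yPx; rewrite (Peq x y xA yPx).
rewrite (exchange_big_dep (mem A)) /=; last by move=> x y /PsubA /subsetP; apply.
apply: eq_bigr => y yA.
rewrite (eq_bigl (fun x => x \in P y)) => [|x]; last first.
  apply/andP/idP => [[xA yPx] | xPy]; first by rewrite blockE.
  have xA := subsetP (PsubA y yA) x xPy.
  by rewrite -blockE.
rewrite sumr_const -(mulr_natr (_ / _)) divfK // pnatr_eq0 -lt0n card_gt0.
by apply/set0Pn; exists y; apply: Pxx.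
Qed.

Lemma geometric_gap_bound (R : realFieldType) (K : nat) (a : nat -> R) (r : R) :
  (0 < K)%N -> a 0%N = 0 ->
  (forall i, (i < K)%N -> r - a i <= K%:R * (a i.+1 - a i)) ->
  forall i, (i <= K)%N -> r - a i <= (1 - K%:R^-1) ^+ i * r.
Proof.
move=> K_gt0 a0 gap; have K_gt0R : 0 < K%:R :> R by rewrite ltr0n.
have q_ge0 : 0 <= 1 - K%:R^-1 :> R by rewrite subr_ge0 invf_le1 ?ler1n.
elim=> [|i IH] iK; first by rewrite a0 expr0 mul1r subr0.
have step : r - a i.+1 <= (1 - K%:R^-1) * (r - a i).
  have : (r - a i) / K%:R <= a i.+1 - a i by rewrite ler_pdivrMr // mulrC gap.
  by move=> H; rewrite mulrBl mul1r mulrC; lra.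
by rewrite (le_trans step) // exprS -mulrA ler_wpM2l // IH // ltnW.
Qed.

Lemma one_sub_invn_expn_le (R : realType) (K : nat) :
  (0 < K)%N -> (1 - K%:R^-1) ^+ K <= (expR (1 : R))^-1.
Proof.
move=> K_gt0; have q_ge0 : 0 <= 1 - K%:R^-1 :> R.
  by rewrite subr_ge0 invf_le1 ?ler1n ?ltr0n.
have q_le : 1 - K%:R^-1 <= expR (- K%:R^-1) :> R by rewrite expR_ge1Dx.
apply: (le_trans (lerXn2r K _ _ q_le)); rewrite ?nnegrE ?expR_ge0 //.
by rewrite -expRM_natl mulrN mulfV ?pnatr_eq0 -?lt0n // expRN.
Qed.

Lemma greedy_recursion_bound (R : realType) (K : nat) (a : nat -> R) (r : R) :
  (0 < K)%N -> a 0%N = 0 -> 0 <= r ->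
  (forall i, (i < K)%N -> r - a i <= K%:R * (a i.+1 - a i)) ->
  (1 - (expR (1 : R))^-1) * r <= a K.
Proof.
move=> K_gt0 a0 r_ge0 gap.
have := geometric_gap_bound K_gt0 a0 gap (leqnn K).
have := ler_wpM2r r_ge0 (one_sub_invn_expn_le R K_gt0); lra.
Qed.

Section PerfectMatchings.
Variables (R : realType) (n : nat) (adj : 'I_n -> 'I_n -> bool).

Local Notation Om := (Omega adj).
Local Notation OmI := (OmegaI adj).
Local Notation f := (f R adj).

Lemma in_OmegaI (S : {set 'I_n}) phi y :
  (y \in OmI S phi) = (y \in Om) && [forall v in S, y v == phi v].
Proof. by rewrite inE. Qed.

Lemma OmegaI_self (S : {set 'I_n}) phi : phi \in Om -> phi \in OmI S phi.
Proof. by move=> Om_phi; rewrite in_OmegaI Om_phi; apply/forall_inP. Qed.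

Lemma OmegaI_subOmega (S : {set 'I_n}) phi : OmI S phi \subset Om.
Proof. by apply/subsetP => y; rewrite in_OmegaI => /andP[]. Qed.

Lemma OmegaIS (S S' : {set 'I_n}) phi : S \subset S' -> OmI S' phi \subset OmI S phi.
Proof.
move=> /subsetP sSS'; apply/subsetP => y; rewrite !in_OmegaI => /andP[-> /forall_inP eq_y].
by apply/forall_inP => v /sSS' /eq_y.
Qed.

Lemma OmegaI0 phi : OmI set0 phi = Om.
Proof.
by apply/setP => y; rewrite in_OmegaI andb_idr // => _; apply/forall_inP => v; rewrite inE.
Qed.

Lemma OmegaI_eq (S : {set 'I_n}) phi y : y \in OmI S phi -> OmI S y = OmI S phi.
Proof.
rewrite in_OmegaI => /andP[_ /forall_inP eq_y]; apply/setP => z; rewrite !in_OmegaI.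
congr (_ && _); apply/forall_inP/forall_inP => eq_z v vS.
  by rewrite (eqP (eq_z v vS)) eq_y.
by rewrite (eqP (eq_z v vS)) eq_sym eq_y.
Qed.

Lemma OmegaI_agree (S : {set 'I_n}) phi x y v :
  v \in S -> x \in OmI S phi -> y \in OmI S phi -> x v = y v.
Proof.
move=> vS; rewrite !in_OmegaI => /andP[_ /forall_inP eq_x] /andP[_ /forall_inP eq_y].
by rewrite (eqP (eq_x v vS)) (eqP (eq_y v vS)).
Qed.

Lemma OmegaI_setU1 (S : {set 'I_n}) v phi :
  OmI (S :|: [set v]) phi = OmI S phi :&: [set y : realization n | y v == phi v].
Proof.
apply/setP => y; rewrite in_setI !in_OmegaI -andbA; congr (_ && _); rewrite inE.
apply/forall_inP/andP => [eq_y | [/forall_inP eq_y eq_yv] w].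
  by split; [apply/forall_inP => w wS|]; apply: eq_y; rewrite !inE ?wS ?eqxx ?orbT.
by rewrite !inE => /orP[/eq_y | /eqP ->].
Qed.

Definition dist_at (v : 'I_n) (x y : realization n) : R := (x v != y v)%:R.

Definition mean_gain (C : {set realization n}) (v : 'I_n) : R :=
  cross_sum (dist_at v) C C / #|C|%:R.

Lemma f_setU1 (S : {set 'I_n}) v phi :
  f (S :|: [set v]) phi - f S phi = \sum_(y in OmI S phi) dist_at v phi y.
Proof.
set E := [set y : realization n | y v == phi v].
rewrite /Defs.f OmegaI_setU1 -/E.
have -> : #|OmI S phi|%:R = #|OmI S phi :&: E|%:R + #|OmI S phi :\: E|%:R :> R.
  by rewrite -natrD cardsID.
rewrite (big_setID E) /= big1 => [|y /setIP [_]]; last first.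
  by rewrite inE /dist_at => /eqP ->; rewrite eqxx.
rewrite add0r (eq_bigr (fun=> 1)) => [|y /setDP [_]]; last first.
  by rewrite inE /dist_at eq_sym => /negPf ->.
by rewrite sumr_const; ring.
Qed.

Lemma f_ge0 (S : {set 'I_n}) phi : 0 <= f S phi.
Proof. by rewrite /Defs.f subr_ge0 ler_nat subset_leq_card ?OmegaI_subOmega. Qed.

Lemma f_set0 phi : f set0 phi = 0.
Proof. by rewrite /Defs.f OmegaI0 subrr. Qed.

Lemma f_subset (S S' : {set 'I_n}) phi : S \subset S' -> f S phi <= f S' phi.
Proof. by move=> sSS'; rewrite lerD2l lerN2 ler_nat subset_leq_card ?OmegaIS. Qed.

Lemma dist_at_ge0 v x y : 0 <= dist_at v x y.
Proof. exact: ler0n. Qed.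

Lemma dist_atC v x y : dist_at v x y = dist_at v y x.
Proof. by rewrite /dist_at eq_sym. Qed.

Lemma dist_at_tri v x y z : dist_at v x y <= dist_at v x z + dist_at v y z.
Proof.
rewrite /dist_at; have [-> | neq_xy] := eqVneq (x v) (y v); first exact: addr_ge0.
have [eq_xz | _] := eqVneq (x v) (z v); last by rewrite lerDl.
by rewrite -eq_xz eq_sym neq_xy add0r.
Qed.

Lemma mean_gain_ge0 C v : 0 <= mean_gain C v.
Proof. by rewrite divr_ge0 ?cross_sum_ge0 // => *; apply: dist_at_ge0. Qed.

Lemma mean_gain_subset (B C : {set realization n}) v :
  B \subset C -> mean_gain B v <= mean_gain C v.
Proof.
by apply: cross_sum_mean_mono; [apply: dist_at_ge0 | apply: dist_atC | apply: dist_at_tri].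
Qed.

Lemma mean_gain_OmegaI_mem (S : {set 'I_n}) phi v :
  v \in S -> mean_gain (OmI S phi) v = 0.
Proof.
move=> vS; rewrite /mean_gain /cross_sum big1 ?mul0r // => x x_in.
by rewrite big1 // => y y_in; rewrite /dist_at (OmegaI_agree vS x_in y_in) eqxx.
Qed.

Lemma in_consistent psi y : (y \in consistent adj psi) = (y \in Om) && agrees y psi.
Proof. by rewrite inE. Qed.

Lemma agreesP (y : realization n) (psi : Defs.pmap n) :
  reflect (forall w u, psi w = Some u -> y w = u) (agrees y psi).
Proof.
apply: (iffP forallP) => [agr w u psi_w | agr w].
  by move: (agr w); rewrite psi_w => /eqP [].
by case psi_w: (psi w) => [u|] //=; rewrite (agr w u psi_w) eqxx.
Qed.

Lemma OmegaI_dom psi phi :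
  phi \in consistent adj psi -> OmI (dom psi) phi = consistent adj psi.
Proof.
rewrite in_consistent => /andP[_ /agreesP agr_phi]; apply/setP => y.
rewrite in_OmegaI in_consistent; congr (_ && _).
apply/forall_inP/agreesP => [eq_y w u psi_w | agr_y w].
  have w_dom : w \in dom psi by rewrite inE psi_w.
  by rewrite (eqP (eq_y w w_dom)) (agr_phi w u psi_w).
rewrite inE; case psi_w: (psi w) => [u|] // _.
by rewrite (agr_y w u psi_w) (agr_phi w u psi_w).
Qed.

Lemma Delta_mean_gain v psi : Delta R adj v psi = mean_gain (consistent adj psi) v.
Proof.
rewrite /Delta /mean_gain /cross_sum; congr (_ / _); apply: eq_bigr => phi phi_in.
by rewrite f_setU1 OmegaI_dom.
Qed.

Lemma consistent_subrealization psi psi' :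
  subrealization psi psi' -> consistent adj psi' \subset consistent adj psi.
Proof.
move=> sub; apply/subsetP => y; rewrite !in_consistent => /andP[-> /agreesP agr_y].
by apply/agreesP => w u psi_w; apply: agr_y; rewrite sub psi_w.
Qed.

Lemma run_outcomes (p : policy n) (phi : realization n) t : all (fun q => q.2 == phi q.1) (run p phi t).
Proof. by elim: t => [|t IH] //=; rewrite all_rcons /= eqxx. Qed.

Lemma psi_ofE (h : history n) (phi : realization n) v :
  all (fun q => q.2 == phi q.1) h ->
  psi_of h v = if v \in map fst h then Some (phi v) else None.
Proof.
rewrite ffunE; elim: h => [|[w u] h IH] //= /andP[/eqP /= -> h_phi].
by rewrite in_cons eq_sym; case: eqP => [-> | _] //=; rewrite IH.
Qed.

Lemma psi_of_run (p : policy n) (phi : realization n) t v :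
  psi_of (run p phi t) v = if v \in selected p t phi then Some (phi v) else None.
Proof. by rewrite (psi_ofE _ (run_outcomes _ _ _)) inE. Qed.

Lemma dom_run (p : policy n) (phi : realization n) t : dom (psi_of (run p phi t)) = selected p t phi.
Proof. by apply/setP => v; rewrite inE psi_of_run; case: ifP. Qed.

Lemma consistent_run (p : policy n) (phi : realization n) t :
  consistent adj (psi_of (run p phi t)) = OmI (selected p t phi) phi.
Proof.
apply/setP => y; rewrite in_consistent in_OmegaI; congr (_ && _).
apply/agreesP/forall_inP => [agr v v_sel | eq_y w u].
  by apply/eqP; apply: agr; rewrite psi_of_run v_sel.
by rewrite psi_of_run; case: ifP => // w_sel [<-]; apply/eqP/eq_y.
Qed.

Lemma selected0 (p : policy n) (phi : realization n) : selected p 0 phi = set0.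
Proof. by apply/setP => v; rewrite !inE. Qed.

Lemma selectedS (p : policy n) (phi : realization n) t :
  selected p t.+1 phi = selected p t phi :|: [set p (run p phi t)].
Proof. by apply/setP => v; rewrite !inE /= map_rcons mem_rcons in_cons orbC. Qed.

Lemma run_eq (p : policy n) t (phi y : realization n) :
  {in selected p t phi, forall v, y v = phi v} -> run p y t = run p phi t.
Proof.
elim: t => [|t IH] //= eq_y.
have run_t : run p y t = run p phi t.
  by apply: IH => v v_sel; apply: eq_y; rewrite selectedS inE v_sel.
by rewrite run_t eq_y // selectedS !inE eqxx orbT.
Qed.

Lemma run_OmegaI (p : policy n) t (S : {set 'I_n}) (phi y : realization n) :
  selected p t phi \subset S -> y \in OmI S phi -> run p y t = run p phi t.
Proof.
move=> /subsetP sub; rewrite in_OmegaI => /andP[_ /forall_inP eq_y].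
by apply: run_eq => v /sub /eq_y /eqP.
Qed.

(* The state S of an adaptive policy and its next item w only depend on the outcomes observed
   on S; averaging over each class OmegaI (S phi) phi turns the realized gain into Delta. *)
Lemma sum_gain_adapted (S : realization n -> {set 'I_n}) (w : realization n -> 'I_n) :
  (forall phi y, phi \in Om -> y \in OmI (S phi) phi -> S y = S phi /\ w y = w phi) ->
  \sum_(phi in Om) (f (S phi :|: [set w phi]) phi - f (S phi) phi) =
  \sum_(phi in Om) mean_gain (OmI (S phi) phi) (w phi).
Proof.
move=> adapted.
have block_eq phi y :
    phi \in Om -> y \in OmI (S phi) phi -> OmI (S y) y = OmI (S phi) phi.
  by move=> phi_in y_in; have [-> _] := adapted _ _ phi_in y_in; apply: OmegaI_eq.
under eq_bigr do rewrite f_setU1.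
rewrite (@sum_block_mean _ _ _ (fun phi => OmI (S phi) phi)); last first.
- by move=> phi _; apply: OmegaI_subOmega.
- exact: block_eq.
- by move=> phi; apply: OmegaI_self.
apply: eq_bigr => phi phi_in; congr (_ / _); apply: eq_bigr => y y_in.
by have [_ ->] := adapted _ _ phi_in y_in; rewrite (block_eq _ _ phi_in y_in).
Qed.

Lemma greedy_mean_gain_max (g : policy n) K i (phi : realization n) v :
  greedy_policy R adj g K -> (i < K)%N -> phi \in Om ->
  mean_gain (OmI (selected g i phi) phi) v <=
  mean_gain (OmI (selected g i phi) phi) (g (run g phi i)).
Proof.
move=> greedy iK phi_in; have [_ g_max] := greedy phi i phi_in iK.
have [v_sel | v_nsel] := boolP (v \in selected g i phi).
  by rewrite mean_gain_OmegaI_mem // mean_gain_ge0.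
by move: (g_max v); rewrite dom_run !Delta_mean_gain consistent_run; apply.
Qed.

Lemma policy_step_le_greedy_step (g pi : policy n) K i t :
  greedy_policy R adj g K -> (i < K)%N ->
  \sum_(phi in Om) (f (selected g i phi :|: selected pi t.+1 phi) phi
                    - f (selected g i phi :|: selected pi t phi) phi)
  <= \sum_(phi in Om) (f (selected g i.+1 phi) phi - f (selected g i phi) phi).
Proof.
move=> greedy iK.
pose U phi := selected g i phi :|: selected pi t phi.
under eq_bigr do rewrite selectedS setUA.
under [X in _ <= X]eq_bigr do rewrite selectedS.
rewrite (@sum_gain_adapted U (fun phi => pi (run pi phi t))); last first.
  move=> phi y _ y_in; have run_g := run_OmegaI (subsetUl _ _) y_in.
  by have run_pi := run_OmegaI (subsetUr _ _) y_in; rewrite /U /selected run_g run_pi.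
rewrite (@sum_gain_adapted (selected g i) (fun phi => g (run g phi i))); last first.
  by move=> phi y _ y_in; rewrite /selected (run_OmegaI (subxx _) y_in).
apply: ler_sum => phi phi_in.
apply: le_trans (greedy_mean_gain_max _ greedy iK phi_in).
exact/mean_gain_subset/OmegaIS/subsetUl.
Qed.

Lemma sum_gap_le_greedy_step (g pi : policy n) K i :
  greedy_policy R adj g K -> (i < K)%N ->
  \sum_(phi in Om) (f (selected pi K phi) phi - f (selected g i phi) phi)
  <= K%:R * \sum_(phi in Om) (f (selected g i.+1 phi) phi - f (selected g i phi) phi).
Proof.
move=> greedy iK.
pose U t phi := selected g i phi :|: selected pi t phi.
apply: (@le_trans _ _ (\sum_(phi in Om) (f (U K phi) phi - f (selected g i phi) phi))).
  by apply: ler_sum => phi _; rewrite lerD2r f_subset // subsetUr.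
have telescope_U phi : f (U K phi) phi - f (selected g i phi) phi =
    \sum_(0 <= t < K) (f (U t.+1 phi) phi - f (U t phi) phi).
  by rewrite telescope_sumr // /U selected0 setU0.
rewrite (eq_bigr _ (fun phi _ => telescope_U phi)) exchange_big /=.
rewrite -[K in K%:R]subn0 mulr_natl -sumr_const_nat.
by apply: ler_sum => t _; apply: (@policy_step_le_greedy_step g pi K i t).
Qed.

Lemma f_adaptive_monotone : adaptive_monotone R adj.
Proof. by move=> psi v _ _; rewrite Delta_mean_gain mean_gain_ge0. Qed.

Lemma f_adaptive_submodular : adaptive_submodular R adj.
Proof.
move=> psi psi' v _ _ sub _; rewrite !Delta_mean_gain.
exact/mean_gain_subset/consistent_subrealization.
Qed.

Lemma greedy_approximation (K : nat) (g pi : policy n) :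
  (0 < K)%N -> greedy_policy R adj g K ->
  (1 - (expR (1 : R))^-1) * Fval R adj pi K <= Fval R adj g K.
Proof.
move=> K_gt0 greedy; apply: greedy_recursion_bound => // [|| i iK].
- by rewrite /Fval big1 ?mul0r // => phi _; rewrite selected0 f_set0.
- by rewrite divr_ge0 ?sumr_ge0 // => phi _; apply: f_ge0.
rewrite /Fval -!mulrBl -!sumrB mulrA ler_wpM2r ?invr_ge0 //.
exact: sum_gap_le_greedy_step.
Qed.

End PerfectMatchings.

Theorem theorem2 (R : realType) (n : nat) (adj : 'I_n -> 'I_n -> bool) :
  Omega adj != set0 ->
  (adaptive_monotone R adj /\ adaptive_submodular R adj) /\
  (forall K : nat, (1 <= K <= n)%N ->
     forall g : policy n, greedy_policy R adj g K ->
     forall pi : policy n, valid_policy adj pi K ->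
       (1 - (expR (1 : R))^-1) * Fval R adj pi K <= Fval R adj g K).
Proof.
move=> _; split; first by split; [apply: f_adaptive_monotone | apply: f_adaptive_submodular].
by move=> K /andP[K_gt0 _] g greedy pi _; apply: greedy_approximation.
Qed.
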